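(* For integers $\lambda_1\ge\lambda_2\ge0$: $F_{(\lambda_1)}(q)=[2]^{\lambda_1}$ and $F_{(\lambda_1,\lambda_2)}(q)=-q^{-1}[2]^{\lambda_1}+q^{-1}[2]^{\lambda_1-\lambda_2+1}[3]^{\lambda_2}$.
   Context: $[m]=1+q+\dots+q^{m-1}$. For a partition $\lambda=(\lambda_1\ge\dots\ge\lambda_k\ge0)$, the Young diagram $Y_\lambda$ has $\lambda_i$ left-justified boxes in row $i$ (row 1 on top). A $\hbox{Le}$-filling of $Y_\lambda$ is a map $D:Y_\lambda\to\{0,1\}$ such that no box filled with $0$ has a box filled with $1$ somewhere above it in the same column and a box filled with $1$ somewhere to its left in the same row. $F_\lambda(q)=\sum_D q^{\#\{\text{boxes with }D=1\}}$ over all $\hbox{Le}$-fillings of $Y_\lambda$. *)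

From HB Require Import structures.
From mathcomp Require Import all_boot all_order all_algebra.
Set Implicit Arguments. Unset Strict Implicit. Unset Printing Implicit Defensive.
Import GRing.Theory.
Local Open Scope ring_scope.

(* A partition is given as a weakly decreasing list of row lengths
   lam = [:: lam_1; ...; lam_k]; row i (0-based, top row = 0) has lam_i
   left-justified boxes.  Box (i, j) = row i, column j (both 0-based). *)
Definition box_in (lam : seq nat) (i j : nat) : bool :=
  (i < size lam)%N && (j < nth 0%N lam i)%N.

Definition ncols (lam : seq nat) : nat := foldr maxn 0%N lam.

(* fillings are {0,1}-valued functions on the bounding rectangle that
   vanish outside Y_lam (true = 1, false = 0) *)
Definition filling (lam : seq nat) :=
  {ffun 'I_(size lam) * 'I_(ncols lam) -> bool}.

Definition is_Le (lam : seq nat) (D : filling lam) : bool :=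
  [forall b : 'I_(size lam) * 'I_(ncols lam), D b ==> box_in lam b.1 b.2] &&
  [forall b : 'I_(size lam) * 'I_(ncols lam), (box_in lam b.1 b.2 && ~~ D b) ==>
     ~~ ([exists i : 'I_(size lam), ((i < b.1)%N && D (i, b.2))] &&
         [exists j : 'I_(ncols lam), ((j < b.2)%N && D (b.1, j))])].

Definition weight (lam : seq nat) (D : filling lam) : nat := #|[pred b | D b]|.

Definition F_Le (R : comRingType) (lam : seq nat) (q : R) : R :=
  \sum_(D : filling lam | is_Le D) q ^+ weight D.

Definition qint (R : comRingType) (q : R) (m : nat) : R :=
  \sum_(i < m) q ^+ i.

From HB Require Import structures.
From mathcomp Require Import all_boot all_order all_algebra.
From mathcomp Require Import ring.
Set Implicit Arguments.
Unset Strict Implicit.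
Unset Printing Implicit Defensive.

Import GRing.Theory.
Local Open Scope ring_scope.

(* Read a filling with at most two rows column by column, a column being the
   pair (top entry, bottom entry). A column interacts with the columns to its
   left only through one bit, [seen]: whether the bottom row already contains
   a 1 further left. Once [seen] holds, the column (1, 0) is forbidden below
   [l2], so each column below [l2] contributes [1 + q + q^2]; before, a column
   contributes [1 + q] and leaves [seen] unset, or [q + q^2] and sets it.
   Solving this two-state linear recurrence gives the closed forms, and the
   one-row case is the degenerate case [l2 = 0]. *)

Definition ffun_cons (X : finType) n (x : X) (f : {ffun 'I_n -> X}) :
    {ffun 'I_n.+1 -> X} :=
  [ffun i => if unlift ord0 i is Some j then f j else x].

Lemma ffun_cons0 (X : finType) n (x : X) (f : {ffun 'I_n -> X}) :
  ffun_cons x f ord0 = x.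
Proof. by rewrite ffunE unlift_none. Qed.

Lemma ffun_consS (X : finType) n (x : X) (f : {ffun 'I_n -> X}) j :
  ffun_cons x f (lift ord0 j) = f j.
Proof. by rewrite ffunE liftK. Qed.

Lemma big_ffun_cons (R : nmodType) (X : finType) n (F : {ffun 'I_n.+1 -> X} -> R) :
  \sum_g F g = \sum_x \sum_(f : {ffun 'I_n -> X}) F (ffun_cons x f).
Proof.
rewrite pair_bigA /= (reindex (fun p : X * {ffun 'I_n -> X} => ffun_cons p.1 p.2)) //.
exists (fun g : {ffun 'I_n.+1 -> X} => (g ord0, [ffun j => g (lift ord0 j)])).
  move=> [x f] _ /=; rewrite ffun_cons0; congr pair.
  by apply/ffunP => j; rewrite ffunE ffun_consS.
move=> g _; apply/ffunP => i; rewrite ffunE.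
by case: unliftP => [j ->|->]; rewrite ?ffunE.
Qed.

Lemma sum_bool_pair (R : nmodType) (F : bool * bool -> R) :
  \sum_x F x = F (true, true) + F (true, false) + (F (false, true) + F (false, false)).
Proof.
transitivity (\sum_a \sum_b F (a, b)); last by rewrite !big_bool.
by rewrite pair_bigA; apply: eq_bigr => -[].
Qed.

Lemma forall_ordS n (P : pred 'I_n.+1) :
  [forall i, P i] = P ord0 && [forall i : 'I_n, P (lift ord0 i)].
Proof.
apply/forallP/andP => [H|[H0 /forallP H] i]; first by split => //; apply/forallP.
by case: (unliftP ord0 i) => [j ->|->].
Qed.

Lemma exists_ordS n (P : pred 'I_n.+1) :
  [exists i, P i] = P ord0 || [exists i : 'I_n, P (lift ord0 i)].
Proof.
apply/existsP/orP => [[i]|[H0|/existsP[j Hj]]]; last 2 first.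
- by exists ord0.
- by exists (lift ord0 j).
by case: (unliftP ord0 i) => [j ->|->] H; [right; apply/existsP; exists j|left].
Qed.

Lemma forall_ord0 (P : pred 'I_0) : [forall i, P i].
Proof. by apply/forallP => -[]. Qed.

Lemma exists_ord0 (P : pred 'I_0) : [exists i, P i] = false.
Proof. by apply/existsP => -[[]]. Qed.

Lemma forall_pair (A B : finType) (P : pred (A * B)) :
  [forall b, P b] = [forall i, [forall j, P (i, j)]].
Proof.
apply/forallP/forallP => H; first by move=> i; apply/forallP => j; exact: H (i, j).
by move=> [i j]; exact: (forallP (H i) j).
Qed.

Lemma forall_andb (A : finType) (P Q : pred A) :
  [forall j, P j] && [forall j, Q j] = [forall j, P j && Q j].
Proof.
apply/andP/forallP => [[/forallP HP /forallP HQ] j|H]; first by rewrite HP HQ.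
by split; apply/forallP => j; case/andP: (H j).
Qed.

Lemma weight_by_columns lam (D : filling lam) :
  weight D = (\sum_(j < ncols lam) \sum_(i < size lam) D (i, j))%N.
Proof.
rewrite /weight -sum1_card big_mkcond /= exchange_big pair_bigA /=.
by apply: eq_bigr => -[i j] _; rewrite inE; case: (D (i, j)).
Qed.

Definition le_column (l1 l2 : nat) (seen : bool) (x : bool * bool) : bool :=
  [&& x.1 ==> (0 < l1)%N, x.2 ==> (0 < l2)%N & ((0 < l2)%N && x.1 && ~~ x.2) ==> ~~ seen].

(* [c j] is column [j] of a filling of the shape [l1, l2], as (top, bottom);
   [seen] stands for a 1 in the bottom row to the left of column 0. *)
Definition le_columns n (l1 l2 : nat) (seen : bool) (c : {ffun 'I_n -> bool * bool}) :=
  [forall j : 'I_n, [&& (c j).1 ==> (j < l1)%N, (c j).2 ==> (j < l2)%N &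
     ((j < l2)%N && (c j).1 && ~~ (c j).2) ==>
        ~~ (seen || [exists j' : 'I_n, (j' < j)%N && (c j').2])]].

Definition columns_weight n (c : {ffun 'I_n -> bool * bool}) : nat :=
  \sum_j ((c j).1 + (c j).2).

Lemma le_columns_cons n l1 l2 seen x (f : {ffun 'I_n -> bool * bool}) :
  le_columns l1 l2 seen (ffun_cons x f) =
  le_column l1 l2 seen x && le_columns l1.-1 l2.-1 (seen || x.2) f.
Proof.
rewrite /le_columns forall_ordS ffun_cons0; congr andb.
  rewrite (_ : [exists j', _] = false) ?orbF //.
  by apply/existsP => -[j']; rewrite ltn0.
apply: eq_forallb => j; rewrite ffun_consS exists_ordS ffun_cons0 lift0 /= !ltn_predRL.
congr [&& _, _ & _ ==> ~~ _]; rewrite orbA; congr orb.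
by apply: eq_existsb => j'; rewrite ffun_consS /bump leq0n ltnS.
Qed.

Lemma columns_weight_cons n x (f : {ffun 'I_n -> bool * bool}) :
  columns_weight (ffun_cons x f) = (x.1 + x.2 + columns_weight f)%N.
Proof.
rewrite /columns_weight big_ord_recl ffun_cons0; congr addn.
by apply: eq_bigr => j _; rewrite ffun_consS.
Qed.

Section Columns.

Variables (R : comNzRingType) (q : R).

Definition Fcols n l1 l2 seen : R :=
  \sum_(c : {ffun 'I_n -> bool * bool} | le_columns l1 l2 seen c) q ^+ columns_weight c.

Lemma FcolsS n l1 l2 seen :
  Fcols n.+1 l1 l2 seen =
  \sum_(x | le_column l1 l2 seen x)
     q ^+ (x.1 + x.2) * Fcols n l1.-1 l2.-1 (seen || x.2).
Proof.
rewrite /Fcols big_mkcond big_ffun_cons [RHS]big_mkcond; apply: eq_bigr => x _.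
under eq_bigr => f _ do rewrite le_columns_cons columns_weight_cons.
case: (le_column l1 l2 seen x); last by rewrite big1.
rewrite big_distrr [RHS]big_mkcond; apply: eq_bigr => f _.
by case: (le_columns _ _ _ f); rewrite ?mulr0 // exprD.
Qed.

Lemma Fcols0 l1 l2 seen : Fcols 0 l1 l2 seen = 1.
Proof.
rewrite /Fcols (big_pred1 [ffun=> (false, false)]) => [|c].
  by rewrite /columns_weight big_ord0.
by rewrite inE /le_columns forall_ord0; symmetry; apply/eqP/ffunP => -[].
Qed.

Lemma Fcols_empty n seen : Fcols n 0 0 seen = 1.
Proof.
elim: n seen => [|n IHn] seen; first exact: Fcols0.
by rewrite FcolsS big_mkcond sum_bool_pair /= IHn; ring.
Qed.

Lemma Fcols_top_rowS n l1 seen :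
  Fcols n.+1 l1.+1 0 seen = (1 + q) * Fcols n l1 0 seen.
Proof. by rewrite FcolsS big_mkcond sum_bool_pair /=; ring. Qed.

Lemma Fcols_seenS n l1 l2 :
  Fcols n.+1 l1.+1 l2.+1 true = (1 + q + q ^+ 2) * Fcols n l1 l2 true.
Proof. by rewrite FcolsS big_mkcond sum_bool_pair /=; ring. Qed.

Lemma Fcols_unseenS n l1 l2 :
  Fcols n.+1 l1.+1 l2.+1 false =
  (1 + q) * Fcols n l1 l2 false + (q + q ^+ 2) * Fcols n l1 l2 true.
Proof. by rewrite FcolsS big_mkcond sum_bool_pair /=; ring. Qed.

Lemma Fcols_top_row n l1 seen : (l1 <= n)%N -> Fcols n l1 0 seen = (1 + q) ^+ l1.
Proof.
elim: n l1 => [|n IHn] [|l1] // hl1; rewrite ?Fcols_empty //.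
by rewrite Fcols_top_rowS IHn // exprS.
Qed.

Lemma Fcols_seen n l1 l2 : (l2 <= l1 <= n)%N ->
  Fcols n l1 l2 true = (1 + q) ^+ (l1 - l2) * (1 + q + q ^+ 2) ^+ l2.
Proof.
elim: l2 n l1 => [|l2 IHl2] n l1 /andP[hl2 hl1].
  by rewrite Fcols_top_row // subn0 mulr1.
case: l1 hl2 hl1 => // l1 hl2; case: n => // n hl1.
rewrite Fcols_seenS IHl2; last exact/andP.
by rewrite subSS (exprS _ l2) mulrCA.
Qed.

Lemma Fcols_unseen n l1 l2 : (l2 <= l1 <= n)%N ->
  q * Fcols n l1 l2 false =
  - (1 + q) ^+ l1 + (1 + q) ^+ (l1 - l2 + 1) * (1 + q + q ^+ 2) ^+ l2.
Proof.
elim: l2 n l1 => [|l2 IHl2] n l1 /andP[hl2 hl1].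
  by rewrite Fcols_top_row // subn0 addn1 exprS; ring.
case: l1 hl2 hl1 => // l1 hl2; case: n => // n hl1.
have hl : (l2 <= l1 <= n)%N by exact/andP.
rewrite Fcols_unseenS mulrDr mulrCA IHl2 // mulrCA Fcols_seen //.
by rewrite subSS !addn1 !exprS; ring.
Qed.

End Columns.

Section TwoRows.

Variables (l1 l2 : nat).
Let lam := [:: l1; l2].
Let n := ncols lam.

Definition two_row_filling (c : {ffun 'I_n -> bool * bool}) : filling lam :=
  [ffun b : 'I_2 * 'I_n => if (b.1 : nat) == 0%N then (c b.2).1 else (c b.2).2].

Definition two_row_columns (D : filling lam) : {ffun 'I_n -> bool * bool} :=
  [ffun j => (D (ord0, j), D (ord_max, j))].

Lemma two_row_filling_Le c : is_Le (two_row_filling c) = le_columns l1 l2 false c.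
Proof.
rewrite /is_Le /le_columns !forall_pair !forall_ordS !forall_ord0 !andbT !forall_andb.
apply: eq_forallb => j /=.
rewrite !exists_ordS !exists_ord0 /box_in /bump /= !ffunE /=.
rewrite (eq_existsb (P2 := fun j' : 'I_n => (j' < j)%N && (c j').2)); last first.
  by move=> j'; rewrite ffunE.
by case: (c j) => [[] []]; case: (j < l1)%N; case: (j < l2)%N.
Qed.

Lemma two_row_filling_weight c : weight (two_row_filling c) = columns_weight c.
Proof.
rewrite weight_by_columns; apply: eq_bigr => j _.
by rewrite !big_ord_recl big_ord0 !ffunE addn0.
Qed.

Lemma F_Le_two_rows (R : comNzRingType) (q : R) : F_Le lam q = Fcols q n l1 l2 false.
Proof.
rewrite /F_Le /Fcols (reindex two_row_filling) /=.
  apply: eq_big => c; first by rewrite two_row_filling_Le.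
  by rewrite two_row_filling_weight.
exists two_row_columns => [c _|D _]; apply/ffunP.
  by move=> j; rewrite !ffunE /=; case: (c j).
by move=> [[[|[|i]] hi] j]; rewrite !ffunE //=; congr (D (_, j)); apply: val_inj.
Qed.

End TwoRows.

Section OneRow.

Variable l1 : nat.
Let lam := [:: l1].
Let n := ncols lam.

Definition one_row_columns (D : filling lam) : {ffun 'I_n -> bool * bool} :=
  [ffun j => (D (ord0, j), false)].

Definition one_row_filling (c : {ffun 'I_n -> bool * bool}) : filling lam :=
  [ffun b : 'I_1 * 'I_n => (c b.2).1].

Lemma one_row_columns_Le D : is_Le D = le_columns l1 0 false (one_row_columns D).
Proof.
rewrite /is_Le /le_columns !forall_pair !forall_ordS !forall_ord0 !andbT !forall_andb.
apply: eq_forallb => j.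
by rewrite !ffunE /= exists_ordS exists_ord0 /box_in /= implybT.
Qed.

Lemma one_row_columns_weight D : weight D = columns_weight (one_row_columns D).
Proof.
rewrite weight_by_columns; apply: eq_bigr => j _.
by rewrite big_ord_recl big_ord0 ffunE !addn0.
Qed.

Lemma F_Le_one_row (R : comNzRingType) (q : R) : F_Le lam q = Fcols q n l1 0 false.
Proof.
rewrite /F_Le /Fcols [RHS](reindex one_row_columns) /=.
  apply: eq_big => D; first by rewrite one_row_columns_Le.
  by rewrite one_row_columns_weight.
exists one_row_filling => [D _|c].
  by apply/ffunP => -[[[|i] hi] j]; rewrite !ffunE //=; congr (D (_, j)); apply: val_inj.
rewrite inE /le_columns => /forallP le_c; apply/ffunP => j; rewrite !ffunE.
by move: (le_c j); rewrite /= ltn0; case: (c j) => a [] /=; rewrite ?andbF.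
Qed.

End OneRow.

Lemma qint2E (R : comNzRingType) (q : R) : qint q 2 = 1 + q.
Proof. by rewrite /qint !big_ord_recr big_ord0 /= add0r expr0 expr1. Qed.

Lemma qint3E (R : comNzRingType) (q : R) : qint q 3 = 1 + q + q ^+ 2.
Proof. by rewrite /qint !big_ord_recr big_ord0 /= add0r expr0 expr1. Qed.

Theorem mainTheorem3 (R : fieldType) (q : R) (hq : q != 0)
    (l1 l2 : nat) (hl : (l2 <= l1)%N) :
  F_Le [:: l1] q = qint q 2 ^+ l1 /\
  F_Le [:: l1; l2] q =
    - q^-1 * qint q 2 ^+ l1
    + q^-1 * qint q 2 ^+ (l1 - l2 + 1) * qint q 3 ^+ l2.
Proof.
rewrite qint2E qint3E; split.
  by rewrite F_Le_one_row Fcols_top_row // leq_maxl.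
rewrite F_Le_two_rows; apply: (mulfI hq).
by rewrite Fcols_unseen ?hl ?leq_maxl // mulrDr !mulrA mulrN mulfV // mulNr !mul1r.
Qed.
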